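(* Let $\mathcal{G}$ be a graph on the vertex set $\{1,2,\ldots,d\}$, let $w(\mathcal{G})$ denote its treewidth, and let $\alpha$ be a real scalar. Suppose that: (i) $\mathcal{G}$ is chordal; (ii) $w(\mathcal{G})\leq \frac{2}{3}(d-1)$; (iii) $\alpha<\dfrac{1}{w(\mathcal{G})\sqrt{d-w(\mathcal{G})-1}+w(\mathcal{G})-1}$. Then $$\beta(\mathcal{G},\alpha)\leq\frac{w(\mathcal{G})\sqrt{d-w(\mathcal{G})-1}\;\alpha^2}{1-(w(\mathcal{G})-1)\,\alpha}.$$
   Context: A graph is chordal if it contains no induced cycle of length greater than three. For a chordal graph, $w(\mathcal{G})$ (treewidth) is the number of vertices of a largest clique of $\mathcal{G}$ minus one. For a symmetric matrix $M\in\mathbb{S}^d$, its support graph $\mathrm{supp}(M)$ is the graph on $\{1,\ldots,d\}$ with an edge $\{i,j\}$, $i\neq j$, iff $M_{ij}\neq 0$; $(\mathrm{supp}(M))^{(c)}$ denotes the complement graph. $\|M\|_{\max}=\max_{i\neq j}|M_{ij}|$ (maximum absolute off-diagonal entry). A matrix $M\in\mathbb{S}^d$ is called inverse-consistent if there exists $N\in\mathbb{S}^d$ with zero diagonal such that $M+N\succ 0$, $\mathrm{supp}(N)\subseteq(\mathrm{supp}(M))^{(c)}$, and $\mathrm{supp}((M+N)^{-1})\subseteq\mathrm{supp}(M)$; such $N$ is called an inverse-consistent complement of $M$ and denoted $M^{(c)}$ (every positive definite matrix has a unique inverse-consistent complement). Given a graph $\mathcal{G}$ and scalar $\alpha$,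 $\beta(\mathcal{G},\alpha)$ is defined as the maximum of $\|M^{(c)}\|_{\max}$ over all inverse-consistent positive definite matrices $M$ with all diagonal entries equal to $1$ such that $\mathrm{supp}(M)=\mathcal{G}$ and $\|M\|_{\max}\leq\alpha$. *)

From HB Require Import structures.
From mathcomp Require Import all_boot all_order all_algebra.
Set Implicit Arguments. Unset Strict Implicit. Unset Printing Implicit Defensive.
Import Order.TTheory GRing.Theory Num.Theory.
Local Open Scope ring_scope.

Definition simple_graph (d : nat) (G : rel 'I_d) : Prop :=
  (forall i, ~~ G i i) /\ (forall i j, G i j = G j i).

Definition cyc_adj (k : nat) (i j : 'I_k) : bool :=
  (j == (i.+1 %% k)%N :> nat) || (i == (j.+1 %% k)%N :> nat).

Definition chordal (d : nat) (G : rel 'I_d) : Prop :=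
  forall (k : nat) (c : 'I_k -> 'I_d),
    (4 <= k)%N -> injective c ->
    (forall i j : 'I_k, cyc_adj i j -> G (c i) (c j)) ->
    exists i j : 'I_k, [/\ i != j, ~~ cyc_adj i j & G (c i) (c j)].

Definition is_clique (d : nat) (G : rel 'I_d) (A : {set 'I_d}) : bool :=
  [forall x in A, forall y in A, (x != y) ==> G x y].

(* Treewidth of a chordal graph: size of a largest clique minus one. *)
Definition chordal_treewidth (d : nat) (G : rel 'I_d) : nat :=
  ((\max_(A : {set 'I_d} | is_clique G A) #|A|) - 1)%N.

Definition supp (R : ringType) (d : nat) (M : 'M[R]_d) : rel 'I_d :=
  fun i j => (i != j) && (M i j != 0).

Definition sym_mx (R : ringType) (d : nat) (M : 'M[R]_d) : Prop := M^T = M.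

Definition posdef (R : numFieldType) (d : nat) (M : 'M[R]_d) : Prop :=
  sym_mx M /\ forall x : 'cV[R]_d, x != 0 -> 0 < (x^T *m M *m x) 0 0.

Definition maxnorm (R : numDomainType) (d : nat) (M : 'M[R]_d) : R :=
  \big[Num.max/0]_(i : 'I_d) \big[Num.max/0]_(j : 'I_d | i != j) `|M i j|.

Definition inv_cons_complement (R : numFieldType) (d : nat) (M N : 'M[R]_d)
  : Prop :=
  [/\ sym_mx N, (forall i, N i i = 0), posdef (M + N),
      (forall i j, supp N i j -> ~~ supp M i j) &
      (forall i j, supp (invmx (M + N)) i j -> supp M i j)].

Definition inverse_consistent (R : numFieldType) (d : nat) (M : 'M[R]_d)
  : Prop := sym_mx M /\ exists N, inv_cons_complement M N.

From HB Require Import structures.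
From mathcomp Require Import all_boot all_order all_algebra.
From mathcomp Require Import zify ring lra.
Import Order.TTheory GRing.Theory Num.Theory.

Set Implicit Arguments. Unset Strict Implicit. Unset Printing Implicit Defensive.

(* Let S := M + N.  S is positive definite, M and S agree on the edges of G and N and S
   agree off them, and S^-1 is supported on G; so it suffices to bound |S i j| for
   non-adjacent i != j.  Let K be the inverse of a principal submatrix S[U,U], supported
   on G.  By Dirac's lemma G[U] has a simplicial vertex v not adjacent to i, and
   eliminating v (a Schur complement) gives the inverse of S[U\v,U\v], still supported
   on G because the neighbours of v form a clique.  If j != v we recurse on U\v.  If
   j = v, column v of S K = I writes S k v = sum_c S k c y_c over the at most w
   neighbours c of v, with y_c = - K c v / K v v.  Taking k = c shows that y solves a
   system I + E with |E| <= alpha entrywise, so |y_c| <= alpha / (1 - (w-1) alpha), while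
   |S i c| <= alpha for every c (by recursion when c is not adjacent to i).  Hence
   |S i v| <= w alpha^2 / (1 - (w-1) alpha), which is at most the stated bound because
   d - w - 1 >= 1; this last inequality is the only use of w <= 2/3 (d-1). *)

Lemma cyc_adjC k (i j : 'I_k) : cyc_adj i j = cyc_adj j i.
Proof. by rewrite /cyc_adj orbC. Qed.

Lemma cyc_adj_lt k (i j : 'I_k) : i < j ->
  cyc_adj i j = (j == i.+1 :> nat) || (i == 0 :> nat) && (j == k.-1 :> nat).
Proof.
move=> ij; have jk := ltn_ord j.
rewrite /cyc_adj (modn_small (_ : i.+1 < k)); last by lia.
congr (_ || _); have [jk1 | jk1] : j.+1 < k \/ j.+1 = k by lia.
- by rewrite modn_small //; lia.
- by rewrite jk1 modnn; lia.
Qed.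

Lemma cyc_adj_irr k (i : 'I_k) : 1 < k -> cyc_adj i i = false.
Proof.
move=> k1; rewrite /cyc_adj orbb -{1}(modn_small (ltn_ord i)) -addn1 -{1}(addn0 i).
by rewrite eqn_modDl mod0n modn_small.
Qed.

Section Chordal.
Variables (d : nat) (G : rel 'I_d).
Hypothesis Girr : forall i, ~~ G i i.
Hypothesis Gsym : forall i j, G i j = G j i.

Lemma chordal_no_hole k (g : nat -> 'I_d) : chordal G -> 4 <= k ->
  (forall p q, p < q < k -> g p != g q) ->
  (forall p q, p < q < k -> G (g p) (g q) = (q == p.+1) || (p == 0) && (q == k.-1)) ->
  False.
Proof.
move=> Gch k4 g_inj g_adj.
have cyc_adj_G (i j : 'I_k) : i < j -> G (g i) (g j) = cyc_adj i j.
  by move=> ij; rewrite cyc_adj_lt // g_adj ?ij ?ltn_ord.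
have [||i [j [ij nij Gij]]] := Gch k (fun t : 'I_k => g t) k4.
- move=> i j /= gij; apply/val_inj/eqP.
  by case: (ltngtP i j) => // lt; [move: (g_inj i j) | move: (g_inj j i)];
    rewrite lt ltn_ord gij eqxx => /(_ isT).
- move=> i j; case: (ltngtP i j) => [lt | lt | /val_inj ->].
  + by rewrite cyc_adj_G.
  + by rewrite Gsym cyc_adjC cyc_adj_G.
  + by rewrite cyc_adj_irr //; lia.
- case: (ltngtP i j) Gij => [lt | lt | /val_inj eij]; last by rewrite eij eqxx in ij.
  + by rewrite cyc_adj_G // (negbTE nij).
  + by rewrite Gsym cyc_adj_G // cyc_adjC (negbTE nij).
Qed.

(* A walk of length n is a function on nat, of which only f 0, ..., f n matter. *)
Definition walk_within (W : {set 'I_d}) x y n (f : nat -> 'I_d) :=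
  [/\ f 0 = x, f n = y, (forall i, i < n -> G (f i) (f i.+1))
    & (forall i, 0 < i < n -> f i \in W)].

Definition chordless n (f : nat -> 'I_d) :=
  forall i j, i.+1 < j <= n -> (f i != f j) && ~~ G (f i) (f j).

Lemma walk_shortcut W x y n f i j : walk_within W x y n f -> i.+1 < j <= n ->
  G (f i) (f j) ->
  walk_within W x y (n - (j - i.+1)) (fun t => if t <= i then f t else f (t + (j - i.+1))).
Proof.
move=> [f0 fn fe fw] hij hG; split.
- by rewrite leq0n.
- have -> : (n - (j - i.+1) <= i) = false by apply/negbTE; rewrite -ltnNge; lia.
  by have -> : n - (j - i.+1) + (j - i.+1) = n by lia.
- move=> t ht; case: ifP => h1; case: ifP => h2.
  + apply: fe; lia.
  + have ti : t = i by lia.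
    by subst t; have -> : i.+1 + (j - i.+1) = j by lia.
  + lia.
  + have -> : t.+1 + (j - i.+1) = (t + (j - i.+1)).+1 by lia.
    apply: fe; lia.
- move=> t ht; case: ifP => h; apply: fw; lia.
Qed.

Lemma walk_prefix W x y n f i : walk_within W x y n f -> i < n -> f i = y ->
  walk_within W x y i f.
Proof. by move=> [f0 fn fe fw] hi hy; split => // t ht; [apply: fe|apply: fw]; lia. Qed.

Lemma walk_shorten W x y n f i j : walk_within W x y n f -> i.+1 < j <= n ->
  (f i == f j) || G (f i) (f j) -> exists m g, m < n /\ walk_within W x y m g.
Proof.
move=> fw ij /orP [/eqP fij | Gij]; last first.
  by eexists; eexists; split; last exact: walk_shortcut fw ij Gij; lia.
have [jn | jn] : j < n \/ j = n by lia.
- have Gij : G (f i) (f j.+1) by rewrite fij; case: fw => _ _ fe _; apply: fe.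
  have ij' : i.+1 < j.+1 <= n by lia.
  by eexists; eexists; split; last exact: walk_shortcut fw ij' Gij; lia.
- have fiy : f i = y by case: fw => _ <- _ _; rewrite fij jn.
  by exists i, f; split; [lia | apply: (walk_prefix fw _ fiy); lia].
Qed.

Lemma chordless_walk_exists W x y n f : walk_within W x y n f ->
  exists m g, walk_within W x y m g /\ chordless m g.
Proof.
elim: n {-2}n (leqnn n) f => [|N IH] n nN f fw.
  by exists n, f; split => // i j; lia.
case: (boolP [exists i : 'I_n.+1, exists j : 'I_n.+1,
   (i.+1 < j) && ((f i == f j) || G (f i) (f j))]).
  move=> /existsP [i /existsP [j /andP [ij fij]]].
  have ijn : i.+1 < j <= n by rewrite ij -ltnS ltn_ord.
  have [m [g [mn gw]]] := walk_shorten fw ijn fij.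
  by apply: (IH m _ g gw); lia.
rewrite negb_exists => /forallP no_chord; exists n, f; split => // i j ij.
have := no_chord (inord i); rewrite negb_exists => /forallP /(_ (inord j)).
by rewrite !inordK ?ij -?negb_or //; lia.
Qed.

Lemma chordless_walk_adj W x y n f i j : walk_within W x y n f -> chordless n f ->
  i < j <= n -> f i != f j /\ G (f i) (f j) = (j == i.+1).
Proof.
move=> [_ _ fe _] fc ijn; case: (eqVneq j i.+1) => [ji | ji].
  have /fe Gi : i < n by lia.
  by rewrite ji; split => //; apply: contraTneq Gi => <-; rewrite Girr.
have ijn' : i.+1 < j <= n by lia.
by have /andP [-> /negbTE ->] := fc i j ijn'.
Qed.

Lemma no_walk_outside_nbhd (W : {set 'I_d}) a x y n f : chordal G ->
  G a x -> G a y -> x != y -> ~~ G x y ->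
  (forall z, z \in W -> (z != a) && ~~ G a z) -> ~ walk_within W x y n f.
Proof.
move=> Gch Gax Gay xy nGxy W_out /chordless_walk_exists [{}n [{}f [fw fc]]].
have [f0 fn fe fW] := fw.
have n2 : 1 < n.
  case: n {fw fc fW} fn fe => [|[|n]] // fn fe; first by rewrite -f0 fn eqxx in xy.
  by have := fe 0 isT; rewrite f0 fn (negbTE nGxy).
have f_nbhd t : t <= n -> f t != a /\ G a (f t) = (t == 0) || (t == n).
  move=> tn; case: (posnP t) => [-> | t0].
    by rewrite f0 Gax; split => //; apply: contraTneq Gax => ->; rewrite Girr.
  have [tn' | ->] : t < n \/ t = n by lia.
    have /W_out /andP [fa /negbTE ->] : f t \in W by apply: fW; rewrite t0.
    by rewrite (ltn_eqF tn').
  by rewrite fn eqxx; split => //; apply: contraTneq Gay => ->; rewrite Girr.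
(* a, f 0, ..., f n is a hole of length n + 2. *)
pose g t := if t == 0 then a else f t.-1.
have g_hole p q : p < q < n.+2 ->
    g p != g q /\ G (g p) (g q) = (q == p.+1) || (p == 0) && (q == n.+1).
  case: p => [|p] /andP [pq qn]; case: q pq qn => [|q] //= pq qn.
  - by have [fa ->] := f_nbhd q ltac:(lia); rewrite eq_sym fa.
  - by have [-> ->] := chordless_walk_adj fw fc (i := p) (j := q) ltac:(lia); rewrite orbF.
apply: (@chordal_no_hole n.+2 g Gch); first lia.
- by move=> p q /g_hole [].
- by move=> p q /g_hole [].
Qed.

Definition induced (W : {set 'I_d}) : rel 'I_d := [rel u v | [&& u \in W, v \in W & G u v]].

Lemma induced_sym W : symmetric (induced W).
Proof. by move=> u v; rewrite /induced /= Gsym andbCA. Qed.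

Lemma walk_of_induced_path (W : {set 'I_d}) x y u p : G x u -> u \in W ->
  path (induced W) u p -> G (last u p) y ->
  walk_within W x y (size p).+2 (nth x [:: x, u & rcons p y]).
Proof.
move=> Gxu uW up Gly; have Gp : path G x (u :: rcons p y).
  by rewrite /= Gxu rcons_path Gly andbT (sub_path _ up) // => ? ? /and3P [].
have pW : all (mem W) (u :: p).
  elim: p u uW {Gxu Gly Gp} up => [|v p IH] u uW /=; first by rewrite uW.
  by move=> /andP [/and3P [_ vW _] vp]; rewrite uW; exact: IH vp.
split => //=.
- by rewrite nth_rcons ltnn eqxx.
- by move=> i ilt; move/(pathP x): Gp => /(_ i); rewrite /= size_rcons; apply.
- move=> [//|i] /= ilt; rewrite -rcons_cons nth_rcons /= ifT //.
  by apply: (allP pW); apply: mem_nth.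
Qed.

Definition simplicial (U : {set 'I_d}) v :=
  forall x y, x \in U -> y \in U -> G v x -> G v y -> x != y -> G x y.

Definition outside_nbhd (U : {set 'I_d}) a := [set z in U | (z != a) && ~~ G a z].

Definition component (W : {set 'I_d}) b := [set z in W | connect (induced W) b z].

Definition attachments (U : {set 'I_d}) a (D : {set 'I_d}) :=
  [set s in U | G a s && [exists z in D, G s z]].

Lemma component_closed W b z y : z \in component W b -> y \in W -> G z y ->
  y \in component W b.
Proof.
rewrite !inE => /andP [zW bz] yW Gzy; rewrite yW.
by apply: connect_trans bz (connect1 _); rewrite /induced /= zW yW.
Qed.

Section Separator.
Variables (U : {set 'I_d}) (a b : 'I_d).
Let W := outside_nbhd U a.
Let D := component W b.
Let A := attachments U a D.

Lemma attachments_clique x y : chordal G -> x \in A -> y \in A -> x != y -> G x y.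
Proof.
move=> Gch; rewrite inE => /and3P [_ Gax /existsP [u /andP [uD Gxu]]].
rewrite inE => /and3P [_ Gay /existsP [v /andP [vD Gyv]]] xy; apply/negPn/negP => nGxy.
move: (uD); rewrite inE => /andP [uW bu].
have bv : connect (induced W) b v by move: vD; rewrite inE => /andP [].
have /connectP [p up vl] : connect (induced W) u v.
  by apply: connect_trans bv; rewrite (sym_connect_sym (induced_sym W)).
subst v.
apply: (no_walk_outside_nbhd (W := W) Gch Gax Gay xy nGxy); last first.
  by apply: (walk_of_induced_path Gxu uW up); rewrite Gsym.
by move=> z; rewrite inE => /andP [].
Qed.

Lemma component_nbr v x : v \in D -> x \in U -> G v x -> x \in D :|: A.
Proof.
move=> vD xU Gvx; have : v \in W by move: vD; rewrite inE => /andP [].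
rewrite inE => /and3P [_ va nGav].
case: (boolP (G a x)) => Gax.
  rewrite in_setU; apply/orP; right; rewrite inE xU Gax.
  by apply/existsP; exists v; rewrite vD Gsym.
have xW : x \in W by rewrite inE xU Gax andbT; apply: contraNneq nGav => <-; rewrite Gsym.
by rewrite in_setU; apply/orP; left; apply: component_closed vD xW Gvx.
Qed.

Lemma component_attachments_sub : D :|: A \subset U :\ a.
Proof.
apply/subsetP => z; rewrite in_setD1 in_setU => /orP [zD | zA].
  have : z \in W by move: zD; rewrite inE => /andP [].
  by rewrite inE => /and3P [-> -> _].
move: zA; rewrite inE => /and3P [-> Gaz _]; rewrite andbT.
by apply: contraTneq Gaz => ->; rewrite Girr.
Qed.

Lemma simplicial_of_component v : v \in D -> simplicial (D :|: A) v ->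
  [/\ v \in U, v != a, ~~ G a v & simplicial U v].
Proof.
move=> vD sv; have := vD; rewrite !inE => /andP [/and3P [vU va nGav] _].
split => // x y xU yU Gvx Gvy.
by apply: sv => //; apply: component_nbr vD _ _.
Qed.

End Separator.

(* Dirac's argument: D :|: A is smaller than U, a simplicial vertex of D :|: A lying in D
   is simplicial in U, and two non-adjacent vertices cannot both lie in the clique A. *)
Theorem exists_simplicial_nonadj (U : {set 'I_d}) a b : chordal G ->
  a \in U -> b \in U -> b != a -> ~~ G a b ->
  exists v, [/\ v \in U, v != a, ~~ G a v & simplicial U v].
Proof.
move=> Gch; move: {2}#|U|.+1 (ltnSn #|U|) => n.
elim: n U a b => [//|n IH] U a b Un aU bU ba nGab.
set D := component (outside_nbhd U a) b; set A := attachments U a D.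
have bD : b \in D by rewrite !inE bU ba nGab connect0.
have DA_lt : #|D :|: A| < n.
  have := subset_leq_card (component_attachments_sub U a b); rewrite -/D -/A.
  by move: Un; rewrite (cardsD1 a U) aU add1n ltnS => Un le; apply: leq_ltn_trans le Un.
have [[x z] /= /and4P [xDA zDA xz nGxz] | DA_clique] :=
  pickP [pred p | [&& p.1 \in D :|: A, p.2 \in D :|: A, p.1 != p.2 & ~~ G p.1 p.2]];
  last first.
  exists b; apply: (simplicial_of_component bD) => x y xDA yDA _ _ xy.
  by have /= := DA_clique (x, y); rewrite xDA yDA xy => /negbT; rewrite negbK.
have [v1 [v1DA v1x nGxv1 sv1]] : exists v1, [/\ v1 \in D :|: A, v1 != x, ~~ G x v1
    & simplicial (D :|: A) v1] by apply: (IH _ _ z); rewrite // eq_sym.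
move: (v1DA); rewrite inE => /orP [v1D | v1A].
  by exists v1; apply: simplicial_of_component v1D sv1.
have [v2 [v2DA v2v1 nGv1v2 sv2]] : exists v2, [/\ v2 \in D :|: A, v2 != v1, ~~ G v1 v2
    & simplicial (D :|: A) v2] by apply: (IH _ _ x); rewrite // 1?eq_sym 1?Gsym.
move: (v2DA); rewrite inE => /orP [v2D | v2A].
  by exists v2; apply: simplicial_of_component v2D sv2.
by have := attachments_clique Gch v1A v2A; rewrite eq_sym v2v1 (negbTE nGv1v2) => /(_ isT).
Qed.

End Chordal.

Local Open Scope ring_scope.

Section FixpointBound.
Variables (R : realFieldType) (T : finType) (C : {set T}) (m : nat) (alpha : R).
Hypotheses (Cm : (#|C| <= m)%N) (alpha_ge0 : 0 <= alpha).

Lemma norm_sum_mul_le (a b : T -> R) (beta : R) : 0 <= beta ->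
  (forall c, c \in C -> `|a c| <= alpha) -> (forall c, c \in C -> `|b c| <= beta) ->
  `|\sum_(c in C) a c * b c| <= m%:R * (alpha * beta).
Proof.
move=> beta_ge0 ha hb; apply: le_trans (ler_norm_sum _ _ _) _.
apply: le_trans (_ : \sum_(c in C) alpha * beta <= _).
  by apply: ler_sum => c cC; rewrite normrM ler_pM ?ha ?hb.
rewrite sumr_const -[_ *+ #|C|]mulr_natl; apply: ler_wpM2r; first exact: mulr_ge0.
by rewrite ler_nat.
Qed.

Lemma abs_le_of_perturbed_identity (s y : T -> R) (A : T -> T -> R) :
  0 < 1 - (m%:R - 1) * alpha ->
  (forall c, c \in C -> `|s c| <= alpha) ->
  (forall c c', c \in C -> c' \in C -> c' != c -> `|A c c'| <= alpha) ->
  (forall c, c \in C -> y c + \sum_(c' in C | c' != c) A c c' * y c' = s c) ->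
  forall c, c \in C -> `|y c| <= alpha / (1 - (m%:R - 1) * alpha).
Proof.
move=> contraction hs hA hy c cC; rewrite ler_pdivlMr //.
case: (arg_maxP (fun c => `|y c|) cC) => c0 c0C c0max.
apply: le_trans (_ : `|y c0| * (1 - (m%:R - 1) * alpha) <= _).
  by apply: ler_wpM2r; [exact: ltW | exact: c0max].
set Y := `|y c0|.
have rest_le : `|\sum_(c' in C | c' != c0) A c0 c' * y c'| <= (m%:R - 1) * alpha * Y.
  apply: le_trans (ler_norm_sum _ _ _) _.
  apply: le_trans (_ : \sum_(c' in C | c' != c0) alpha * Y <= _).
    by apply: ler_sum => c' /andP [c'C c'c0]; rewrite normrM ler_pM ?hA //; apply: c0max.
  have e : \sum_(c' in C) alpha * Y = alpha * Y + \sum_(c' in C | c' != c0) alpha * Y.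
    by rewrite (bigD1 c0 c0C).
  have aY : 0 <= alpha * Y := mulr_ge0 alpha_ge0 (normr_ge0 _).
  have Cm' : alpha * Y *+ #|C| <= alpha * Y *+ m := ler_wpMn2l aY Cm.
  have -> : (m%:R - 1) * alpha * Y = alpha * Y *+ m - alpha * Y.
    by rewrite -mulrA mulrBl mul1r mulr_natl.
  move: e; rewrite !sumr_const; lra.
have e : y c0 = s c0 - \sum_(c' in C | c' != c0) A c0 c' * y c' by rewrite -hy // addrK.
have : Y <= alpha + (m%:R - 1) * alpha * Y.
  rewrite {1}/Y e; apply: le_trans (ler_normB _ _) _; exact: lerD (hs _ c0C) rest_le.
lra.
Qed.

End FixpointBound.

Section Elimination.
Variables (R : realFieldType) (d : nat) (G : rel 'I_d) (S : 'M[R]_d).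
Hypothesis Girr : forall i, ~~ G i i.
Hypothesis Gsym : forall i j, G i j = G j i.
Hypothesis S_posdef : forall x : 'cV[R]_d, x != 0 -> 0 < (x^T *m S *m x) 0 0.

(* K is the inverse of the principal submatrix S[U,U], padded with zeros, and its
   off-diagonal support lies in G. *)
Definition inverse_on (U : {set 'I_d}) (K : 'M[R]_d) :=
  (forall i j, K i j != 0 -> [&& i \in U, j \in U & (i == j) || G i j]) /\
  (forall i j, i \in U -> j \in U -> (S *m K) i j = (i == j)%:R).

Lemma inverse_on_diag_gt0 U K v : inverse_on U K -> v \in U -> 0 < K v v.
Proof.
move=> [K_supp SK] vU; pose x : 'cV[R]_d := \col_i K i v.
have Sx i : (S *m x) i 0 = (S *m K) i v.
  by rewrite !mxE; apply: eq_bigr => j _; rewrite mxE.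
have xT i : x^T 0 i = K i v by rewrite !mxE.
have xSx : (x^T *m S *m x) 0 0 = K v v.
  rewrite -mulmxA mxE (bigD1 v) //= big1 ?addr0 => [|i iv].
    by rewrite Sx SK // eqxx mulr1 xT.
  rewrite Sx xT; have [-> | /K_supp /and3P [iU _ _]] := eqVneq (K i v) 0.
    by rewrite mul0r.
  by rewrite SK // (negbTE iv) mulr0.
have x_neq0 : x != 0.
  apply/eqP => x0; have := SK v v vU vU.
  by rewrite -Sx x0 mulmx0 mxE eqxx => /eqP; rewrite eq_sym oner_eq0.
by rewrite -xSx S_posdef.
Qed.

Definition nbrs (U : {set 'I_d}) v := [set c in U | G v c].

Lemma inverse_on_col U K v r : inverse_on U K -> v \in U -> r \in U -> r != v ->
  S r v = \sum_(c in nbrs U v) S r c * (- K c v / K v v).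
Proof.
move=> UK vU rU rv; have Kvv := inverse_on_diag_gt0 UK vU.
case: UK => K_supp SK.
have : (S *m K) r v = S r v * K v v + \sum_(c in nbrs U v) S r c * K c v.
  rewrite mxE (bigD1 v) //=; congr (_ + _).
  rewrite big_mkcond [RHS]big_mkcond /=; apply: eq_bigr => c _.
  have [-> | cv] := eqVneq c v; first by rewrite inE (negbTE (Girr v)) andbF.
  case: (eqVneq (K c v) 0) => [-> | /K_supp /and3P [cU _]].
    by rewrite !mulr0 !if_same.
  by rewrite (negbTE cv) /= inE cU Gsym => ->.
rewrite SK // (negbTE rv) => /esym/eqP; rewrite addr_eq0 => /eqP Svv.
apply: (mulIf (lt0r_neq0 Kvv)); rewrite Svv -sumrN mulr_suml.
by apply: eq_bigr => c _; rewrite -mulrA divfK ?lt0r_neq0 // mulrN.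
Qed.

Definition eliminate (K : 'M[R]_d) v := \matrix_(i, j) (K i j - K i v * K v j / K v v).

Lemma inverse_on_eliminate U K v : inverse_on U K -> v \in U -> simplicial G U v ->
  inverse_on (U :\ v) (eliminate K v).
Proof.
move=> UK vU sv; have Kvv := lt0r_neq0 (inverse_on_diag_gt0 UK vU).
case: UK => K_supp SK; split=> [i j | i j].
- rewrite mxE; have [-> | iv] := eqVneq i v.
    by rewrite mulrAC divff // mul1r subrr eqxx.
  have [-> | jv] := eqVneq j v; first by rewrite -mulrA divff // mulr1 subrr eqxx.
  rewrite !inE iv jv /=; have [Kij0 | /K_supp /and3P [-> -> //]] := eqVneq (K i j) 0.
  rewrite Kij0 sub0r oppr_eq0 !mulf_eq0 !negb_or => /andP [/andP [Kiv Kvj] _].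
  have /and3P [iU _ /orP [/eqP iv' | Giv]] := K_supp _ _ Kiv; first by rewrite iv' eqxx in iv.
  have /and3P [_ jU /orP [/eqP vj | Gvj]] := K_supp _ _ Kvj; first by rewrite vj eqxx in jv.
  rewrite iU jU /=; have [_ // | ij] := eqVneq i j.
  by apply: sv; rewrite // Gsym.
- rewrite !inE => /andP [iv iU] /andP [jv jU].
  have -> : (S *m eliminate K v) i j = (S *m K) i j - (S *m K) i v * K v j / K v v.
    by rewrite !mxE !mulr_suml -sumrB; apply: eq_bigr => l _; rewrite !mxE; ring.
  by rewrite SK // SK // (negbTE iv) !mul0r subr0.
Qed.

End Elimination.

Section Bound.
Variables (R : realFieldType) (d : nat) (G : rel 'I_d) (S : 'M[R]_d) (alpha : R) (m : nat).
Hypothesis Girr : forall i, ~~ G i i.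
Hypothesis Gsym : forall i j, G i j = G j i.
Hypothesis Gch : chordal G.
Hypothesis clique_card : forall A : {set 'I_d}, is_clique G A -> (#|A| <= m.+1)%N.
Hypothesis S_posdef : forall x : 'cV[R]_d, x != 0 -> 0 < (x^T *m S *m x) 0 0.
Hypothesis S_diag : forall i, S i i = 1.
Hypothesis S_edge : forall i j, G i j -> `|S i j| <= alpha.
Hypothesis alpha_ge0 : 0 <= alpha.
Hypothesis contraction : 0 < 1 - (m%:R - 1) * alpha.
Let gamma := m%:R * alpha ^+ 2 / (1 - (m%:R - 1) * alpha).
Hypothesis gamma_le : gamma <= alpha.

Lemma card_nbrs_simplicial U v : simplicial G U v -> (#|nbrs G U v| <= m)%N.
Proof.
move=> sv; have : is_clique G (v |: nbrs G U v).
  have nbr c : c \in v |: nbrs G U v -> c = v \/ c \in U /\ G v c.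
    by rewrite !inE => /orP [/eqP | /andP]; [left | right].
  apply/forallP => x; apply/implyP => /nbr xA; apply/forallP => y; apply/implyP => /nbr yA.
  case: xA yA => [-> | [xU Gvx]] [-> | [yU Gvy]]; apply/implyP => xy //.
  - by rewrite eqxx in xy.
  - by rewrite Gsym.
  - exact: sv.
by move/clique_card; rewrite cardsU1 inE (negbTE (Girr v)) andbF.
Qed.

Lemma simplicial_offdiag_le U K v k : inverse_on G S U K -> v \in U -> simplicial G U v ->
  k \in U -> k != v -> (forall c, c \in nbrs G U v -> `|S k c| <= alpha) ->
  `|S k v| <= gamma.
Proof.
move=> UK vU sv kU kv Skc.
have nbrs_v c : c \in nbrs G U v -> [/\ c \in U, c != v & G v c].
  by rewrite inE => /andP [cU Gvc]; split => //; apply: contraTneq Gvc => ->; rewrite Girr.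
pose y c := - K c v / K v v.
have y_le : forall c, c \in nbrs G U v -> `|y c| <= alpha / (1 - (m%:R - 1) * alpha).
  apply: (abs_le_of_perturbed_identity (card_nbrs_simplicial sv) alpha_ge0 contraction
    (s := fun c => S c v) (A := S)).
  - by move=> c /nbrs_v [_ _ Gvc]; rewrite S_edge // Gsym.
  - move=> c c' /nbrs_v [cU _ Gvc] /nbrs_v [c'U _ Gvc'] c'c.
    by rewrite S_edge // sv // eq_sym.
  - move=> c cC; have [cU cv _] := nbrs_v c cC.
    by rewrite (inverse_on_col Girr Gsym S_posdef UK vU cU cv) (bigD1 c cC) /= S_diag mul1r.
rewrite (inverse_on_col Girr Gsym S_posdef UK vU kU kv).
apply: le_trans (norm_sum_mul_le (card_nbrs_simplicial sv) alpha_ge0 _ Skc y_le) _.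
  exact: divr_ge0 alpha_ge0 (ltW contraction).
by rewrite /gamma expr2 !mulrA.
Qed.

Lemma nonedge_offdiag_le U K i j : inverse_on G S U K -> i \in U -> j \in U ->
  i != j -> ~~ G i j -> `|S i j| <= gamma.
Proof.
move: {2}#|U|.+1 (ltnSn #|U|) => n.
elim: n U K i j => [//|n IH] U K i j Un UK iU jU ij nGij.
have ji : j != i by rewrite eq_sym.
have [v [vU vi nGiv sv]] := exists_simplicial_nonadj Girr Gsym Gch iU jU ji nGij.
have Uv_n : (#|U :\ v| < n)%N by move: Un; rewrite (cardsD1 v U) vU add1n ltnS.
have IH' := IH _ _ _ _ Uv_n (inverse_on_eliminate Gsym S_posdef UK vU sv).
have iUv : i \in U :\ v by rewrite !inE eq_sym vi.
have [-> | jv] := eqVneq j v; last by apply: IH' => //; rewrite !inE jv.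
apply: (simplicial_offdiag_le UK vU sv iU); first by rewrite eq_sym.
move=> c; rewrite inE => /andP [cU Gvc].
have [Gic | nGic] := boolP (G i c); first exact: S_edge.
apply: le_trans gamma_le; apply: IH' => //.
- by rewrite !inE cU andbT; apply: contraTneq Gvc => ->; rewrite Girr.
- by apply: contraNneq nGiv => ->; rewrite Gsym.
Qed.

End Bound.

Section MaxNorm.
Variables (R : realDomainType) (d : nat) (M : 'M[R]_d).

Lemma maxnorm_ge0 : 0 <= maxnorm M.
Proof. exact: bigmax_ge_id. Qed.

Lemma le_maxnorm i j : i != j -> `|M i j| <= maxnorm M.
Proof.
move=> ij; apply: le_trans (le_bigmax _ _ i).
exact: (le_bigmax_cond _ (fun j => `|M i j|) ij).
Qed.

Lemma maxnorm_le b : 0 <= b -> (forall i j, i != j -> `|M i j| <= b) -> maxnorm M <= b.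
Proof.
by move=> b_ge0 Mb; apply: bigmax_le => // i _; apply: bigmax_le => // j; apply: Mb.
Qed.

End MaxNorm.

Lemma clique_card_le_treewidth d (G : rel 'I_d) (A : {set 'I_d}) :
  is_clique G A -> (#|A| <= (chordal_treewidth G).+1)%N.
Proof.
move=> AG; apply: leq_trans (leq_bigmax_cond (F := fun B : {set 'I_d} => #|B|) _ AG) _.
by rewrite /chordal_treewidth subn1 leqSpred.
Qed.

Lemma treewidth_gt0 (R : realFieldType) (wn : nat) (sq alpha : R) : 0 <= alpha ->
  alpha < 1 / (wn%:R * sq + wn%:R - 1) -> (0 < wn)%N.
Proof.
case: wn => // alpha_ge0; rewrite mulr0n mul0r add0r sub0r mul1r invrN1; lra.
Qed.

Lemma sqrt_ge1_of_treewidth (R : rcfType) (d wn : nat) : (0 < wn)%N ->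
  (wn%:R : R) <= 2 / 3 * (d%:R - 1) -> 1 <= Num.sqrt (d%:R - wn%:R - 1 : R).
Proof.
move=> wn_gt0 hw; have wn_ge1 : (1 : R) <= wn%:R by rewrite ler1n.
have wn2d : (wn.+2 <= d)%N.
  rewrite leqNgt; apply/negP; rewrite ltnS -(ler_nat R) -natr1; lra.
rewrite -{1}sqrtr1; apply: ler_wsqrtr.
have : (wn%:R + 1 + 1 : R) <= d%:R by rewrite !natr1 ler_nat.
lra.
Qed.

Lemma gamma_bounds (R : realFieldType) (w sq a : R) : 1 <= w -> 1 <= sq -> 0 <= a ->
  a < 1 / (w * sq + w - 1) ->
  [/\ 0 < 1 - (w - 1) * a, w * a ^+ 2 / (1 - (w - 1) * a) <= a &
      w * a ^+ 2 / (1 - (w - 1) * a) <= w * sq * a ^+ 2 / (1 - (w - 1) * a)].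
Proof.
move=> w_ge1 sq_ge1 a_ge0; have wsq_ge1 : 1 <= w * sq by rewrite -[1]mulr1 ler_pM.
rewrite ltr_pdivlMr; last lra.
move=> small; have den_gt0 : 0 < 1 - (w - 1) * a by nra.
split => //.
- by rewrite ler_pdivrMr // expr2; nra.
- apply: ler_wpM2r; first by rewrite invr_ge0 ltW.
  by rewrite -mulrA ler_wpM2l ?ler_peMl ?sqr_ge0; lra.
Qed.

Lemma posdef_unitmx (R : numFieldType) d (S : 'M[R]_d) :
  (forall x : 'cV[R]_d, x != 0 -> 0 < (x^T *m S *m x) 0 0) -> S \in unitmx.
Proof.
move=> S_pos; rewrite unitmxE unitfE; apply/negP => /det0P [v v0 vS].
by have := S_pos v^T; rewrite trmx_eq0 v0 trmxK vS mul0mx mxE ltxx => /(_ isT).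
Qed.

Lemma supp_nonedge_eq0 (R : nzRingType) d (M : 'M[R]_d) (G : rel 'I_d) i j :
  supp M =2 G -> i != j -> ~~ G i j -> M i j = 0.
Proof. by move=> <- ij; rewrite /supp ij negbK => /eqP. Qed.

Section Complement.
Variables (R : realFieldType) (d : nat) (G : rel 'I_d) (M N : 'M[R]_d).
Hypotheses (suppMG : supp M =2 G) (MN : inv_cons_complement M N).

Lemma complement_edge_eq0 i j : G i j -> N i j = 0.
Proof.
case: MN => _ _ _ suppN _ Gij; apply/eqP; apply: contraTT Gij => Nij.
rewrite -suppMG; apply: suppN; rewrite /supp Nij andbT.
by apply: contraNneq Nij => ->; case: MN => _ ->.
Qed.

Lemma complement_diag : (forall i, M i i = 1) -> forall i, (M + N) i i = 1.
Proof. by case: MN => _ N_diag _ _ _ M_diag i; rewrite mxE M_diag N_diag addr0. Qed.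

Lemma complement_edge_le alpha i j : (forall i, ~~ G i i) -> maxnorm M <= alpha ->
  G i j -> `|(M + N) i j| <= alpha.
Proof.
move=> Girr maxM Gij; rewrite mxE (complement_edge_eq0 Gij) addr0.
by apply: le_trans maxM; apply: le_maxnorm; apply: contraTneq Gij => ->.
Qed.

Lemma complement_nonedge i j : i != j -> ~~ G i j -> N i j = (M + N) i j.
Proof. by move=> ij nGij; rewrite mxE (supp_nonedge_eq0 suppMG ij nGij) add0r. Qed.

Lemma inverse_on_complement : inverse_on G (M + N) [set: 'I_d] (invmx (M + N)).
Proof.
case: MN => _ _ [_ S_pos] _ supp_inv; split => [i j Kij | i j _ _].
  rewrite !inE /=; have [//| ij] := eqVneq i j.
  by rewrite -suppMG supp_inv // /supp ij.
by rewrite mulmxV ?posdef_unitmx // mxE.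
Qed.

End Complement.

Theorem theorem2 (R : rcfType) (d : nat) (G : rel 'I_d) (alpha : R) :
  simple_graph G ->
  chordal G ->
  let w : R := (chordal_treewidth G)%:R in
  w <= 2 / 3 * (d%:R - 1) ->
  alpha < 1 / (w * Num.sqrt (d%:R - w - 1) + w - 1) ->
  forall M N : 'M[R]_d,
    posdef M -> inverse_consistent M ->
    (forall i, M i i = 1) ->
    supp M =2 G ->
    maxnorm M <= alpha ->
    inv_cons_complement M N ->
    maxnorm N <= w * Num.sqrt (d%:R - w - 1) * alpha ^+ 2 / (1 - (w - 1) * alpha).
Proof.
move=> [Girr Gsym] Gch w hw halpha M N _ _ M_diag suppMG maxM MN.
have alpha_ge0 : 0 <= alpha := le_trans (maxnorm_ge0 M) maxM.
have w_gt0 := treewidth_gt0 alpha_ge0 halpha.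
have [contraction gamma_le gamma_le_bound] :=
  gamma_bounds (etrans (ler1n _ _) w_gt0) (sqrt_ge1_of_treewidth w_gt0 hw) alpha_ge0 halpha.
have gamma_ge0 : 0 <= w * alpha ^+ 2 / (1 - (w - 1) * alpha).
  exact: divr_ge0 (mulr_ge0 (ler0n _ _) (sqr_ge0 _)) (ltW contraction).
have S_posdef : forall x : 'cV_d, x != 0 -> 0 < (x^T *m (M + N) *m x) 0 0.
  by case: MN => _ _ [].
apply: maxnorm_le => [|i j ij]; first exact: le_trans gamma_le_bound.
have [Gij | nGij] := boolP (G i j).
  by rewrite (complement_edge_eq0 suppMG MN Gij) normr0 (le_trans gamma_ge0).
rewrite (complement_nonedge N suppMG ij nGij); apply: le_trans gamma_le_bound.
apply: (nonedge_offdiag_le Girr Gsym Gch (@clique_card_le_treewidth _ G) S_posdef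
  (complement_diag MN M_diag) (fun i j => complement_edge_le suppMG MN Girr maxM)
  alpha_ge0 contraction gamma_le (inverse_on_complement suppMG MN)) => //; exact: in_setT.
Qed.
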